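(* Let $\alpha,\beta,\gamma\in\Bbbk^n$. (1) Let $\lambda\in(\Bbbk^\times)^n$ and set $\alpha'_i=\lambda_i\lambda_{i-1}^{-1}\alpha_i$, $\beta'_i=\lambda_{i+1}\lambda_{i-1}^{-1}\beta_i$, $\gamma'_i=\lambda_{i-1}^{-1}\gamma_i$ for all $i$. Then the linear map $\phi_\lambda$ with $\phi_\lambda(e_i)=e_i$, $\phi_\lambda(u_i)=\lambda_iu_i$, $\phi_\lambda(d_i)=d_i$ extends to an isomorphism $\mathcal H(\alpha,\beta,\gamma)\to\mathcal H(\alpha',\beta',\gamma')$. (2) Set $\alpha'_i=\alpha_{i-1}$, $\beta'_i=\beta_{i-1}$, $\gamma'_i=\gamma_{i-1}$. Then the linear map $\psi$ with $\psi(e_i)=e_{i+1}$, $\psi(u_i)=u_{i+1}$, $\psi(d_i)=d_{i+1}$ extends to an isomorphism $\mathcal H(\alpha,\beta,\gamma)\to\mathcal H(\alpha',\beta',\gamma')$. (3) Suppose $\beta_i\neq0$ for all $i$, and set $\alpha'_i=-\beta_{n-i-1}^{-1}\alpha_{n-i-1}$, $\beta'_i=\beta_{n-i-1}^{-1}$, $\gamma'_i=-\beta_{n-i-1}^{-1}\gamma_{n-i-1}$. Then the linear map $\pi$ with $\pi(e_i)=e_{n-i}$, $\pi(u_i)=d_{n-i-1}$, $\pi(d_i)=u_{n-i-1}$ extends to an isomorphism $\mathcal H(\alpha,\beta,\gamma)\to\mathcal H(\alpha',\beta',\gamma')$.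
   Context: $\Bbbk$ is an algebraically closed field of characteristic zero. Fix $n\ge1$; indices mod $n$, $Q_0=\{0,\dots,n-1\}$. $Q$ is the quiver with vertices $Q_0$ and arrows $u_i:i\to i+1$, $d_i:i+1\to i$; paths are written left to right, $e_i$ is the trivial path at $i$. $\mathcal H(\alpha,\beta,\gamma)$ is $\Bbbk Q$ modulo the relations $d_{i-1}u_{i-1}u_i=\alpha_iu_id_iu_i+\beta_iu_iu_{i+1}d_{i+1}+\gamma_iu_i$ and $d_id_{i-1}u_{i-1}=\alpha_id_iu_id_i+\beta_iu_{i+1}d_{i+1}d_i+\gamma_id_i$ for all $i\in Q_0$. *)

From HB Require Import structures.
From mathcomp Require Import all_boot all_order all_algebra.
Set Implicit Arguments. Unset Strict Implicit. Unset Printing Implicit Defensive.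
Import GRing.Theory.
Local Open Scope ring_scope.

(* Vertices of Q are 'I_n (indices mod n).
   vnext i = i+1, vprev i = i-1, vneg i = n-i, vneg1 i = n-i-1 (all mod n). *)
Definition vnext {n} (i : 'I_n) : 'I_n := ordS i.
Definition vprev {n} (i : 'I_n) : 'I_n := ord_pred i.
Definition vneg {n} (i : 'I_n) : 'I_n := ordS (rev_ord i).
Definition vneg1 {n} (i : 'I_n) : 'I_n := rev_ord i.

Section Defs.
Variables (K : fieldType) (n : nat).

Definition alg_hom (A B : algType K) (f : A -> B) : Prop :=
  [/\ forall x y, f (x + y) = f x + f y,
      forall (k : K) x, f (k *: x) = k *: f x,
      forall x y, f (x * y) = f x * f y
    & f 1 = 1].

Definition alg_iso (A B : algType K) (f : A -> B) : Prop :=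
  alg_hom f /\ bijective f.

(* Defining relations of the path algebra KQ in terms of the generators
   e_i (trivial paths), u_i : i -> i+1, d_i : i+1 -> i.
   Paths are written left to right, so the product p * q is the
   concatenation "p then q". *)
Definition quiver_rels (A : algType K) (e u d : 'I_n -> A) : Prop :=
  [/\ forall i j, e i * e j = (if i == j then e i else 0),
      \sum_i e i = 1,
      forall i, u i = e i * u i * e (vnext i)
    & forall i, d i = e (vnext i) * d i * e i].

Definition H_rels (alpha beta gamma : 'I_n -> K) (A : algType K)
    (e u d : 'I_n -> A) : Prop :=
  forall i,
    d (vprev i) * u (vprev i) * u i
      = alpha i *: (u i * d i * u i)
        + beta i *: (u i * u (vnext i) * d (vnext i))
        + gamma i *: u i
  /\ d i * d (vprev i) * u (vprev i)
      = alpha i *: (d i * u i * d i)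
        + beta i *: (u (vnext i) * d (vnext i) * d i)
        + gamma i *: d i.

(* (A, e, u, d) is a presentation of H(alpha,beta,gamma) = KQ / (relations):
   the generators satisfy the quiver and H relations, and A is universal
   (initial) among K-algebras with such elements. *)
Definition is_H (alpha beta gamma : 'I_n -> K) (A : algType K)
    (e u d : 'I_n -> A) : Prop :=
  [/\ quiver_rels e u d,
      H_rels alpha beta gamma e u d,
      (forall (B : algType K) (eB uB dB : 'I_n -> B),
          quiver_rels eB uB dB -> H_rels alpha beta gamma eB uB dB ->
          exists f : A -> B, [/\ alg_hom f,
              forall i, f (e i) = eB i,
              forall i, f (u i) = uB i
            & forall i, f (d i) = dB i])
    & (forall (B : algType K) (f g : A -> B), alg_hom f -> alg_hom g ->
          (forall i, f (e i) = g (e i)) ->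
          (forall i, f (u i) = g (u i)) ->
          (forall i, f (d i) = g (d i)) -> f =1 g)].

End Defs.

(* Each of the three substitutions of generators carries generators satisfying
   the relations of one algebra H to generators satisfying those of the other,
   and the inverse substitution (rescaling by the inverse weights, rotating
   backwards, reflecting once more) goes back.  By the universal property the
   two substitutions induce algebra homomorphisms whose composites fix the
   generators, hence are the identities.  Under the reflection, the first
   defining relation becomes the second one solved for its beta-term, which is
   where beta_i <> 0 is used. *)

From HB Require Import structures.
From mathcomp Require Import all_boot all_order all_algebra zify ring.
Import GRing.Theory.
Set Implicit Arguments. Unset Strict Implicit.
Local Open Scope ring_scope.

Section Vertices.
Variable n : nat.
Implicit Types i : 'I_n.

Lemma vnextK : cancel (@vnext n) vprev. Proof. exact: ordSK. Qed.
Lemma vprevK : cancel (@vprev n) vnext. Proof. exact: ord_predK. Qed.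
Lemma vneg1K : involutive (@vneg1 n). Proof. exact: rev_ordK. Qed.

Lemma vneg1_prev i : vneg1 (vprev i) = vnext (vneg1 i).
Proof.
apply/val_inj => /=; case: i => [[|i] lt_i_n] /=.
  rewrite add0n modn_small; last lia.
  by rewrite prednK // subnn subn1 prednK // modnn.
by rewrite modnDr !modn_small; lia.
Qed.

Lemma vneg1_next i : vneg1 (vnext i) = vprev (vneg1 i).
Proof. by rewrite -[in RHS](vnextK i) vneg1_prev vnextK. Qed.

Lemma vnegE i : vneg i = vnext (vneg1 i). Proof. by []. Qed.

Lemma vneg_next i : vneg (vnext i) = vneg1 i.
Proof. by rewrite vnegE vneg1_next vprevK. Qed.

Lemma vnegK : involutive (@vneg n).
Proof. by move=> i; rewrite [vneg i]vnegE vneg_next vneg1K. Qed.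

Lemma vneg_inj : injective (@vneg n). Proof. exact: inv_inj vnegK. Qed.

End Vertices.

Section Presentations.
Variables (K : fieldType) (n : nat).
Implicit Types (a b c : 'I_n -> K).

Lemma alg_hom_id (A : algType K) : alg_hom (@id A).
Proof. by []. Qed.

Lemma alg_hom_comp (A B C : algType K) (g : B -> C) (f : A -> B) :
  alg_hom g -> alg_hom f -> alg_hom (g \o f).
Proof.
case=> gD gZ gM g1 [fD fZ fM f1]; split=> /= [x y|k x|x y|].
- by rewrite fD gD.
- by rewrite fZ gZ.
- by rewrite fM gM.
- by rewrite f1 g1.
Qed.

Lemma eq_H_rels a b c a' b' c' (A : algType K) (e u d : 'I_n -> A) :
  a =1 a' -> b =1 b' -> c =1 c' -> H_rels a b c e u d -> H_rels a' b' c' e u d.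
Proof. by move=> ha hb hc hH i; rewrite -ha -hb -hc; exact: hH. Qed.

Lemma is_H_iso a b c a' b' c' (A A' : algType K)
    (e u d : 'I_n -> A) (e' u' d' : 'I_n -> A')
    (eB uB dB : 'I_n -> A') (eC uC dC : 'I_n -> A) :
  is_H a b c e u d -> is_H a' b' c' e' u' d' ->
  quiver_rels eB uB dB -> H_rels a b c eB uB dB ->
  quiver_rels eC uC dC -> H_rels a' b' c' eC uC dC ->
  (forall f : A -> A', alg_hom f -> (forall i, f (e i) = eB i) ->
     (forall i, f (u i) = uB i) -> (forall i, f (d i) = dB i) ->
     [/\ forall i, f (eC i) = e' i, forall i, f (uC i) = u' i &
         forall i, f (dC i) = d' i]) ->
  (forall g : A' -> A, alg_hom g -> (forall i, g (e' i) = eC i) ->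
     (forall i, g (u' i) = uC i) -> (forall i, g (d' i) = dC i) ->
     [/\ forall i, g (eB i) = e i, forall i, g (uB i) = u i &
         forall i, g (dB i) = d i]) ->
  exists f : A -> A', [/\ alg_iso f, forall i, f (e i) = eB i,
     forall i, f (u i) = uB i & forall i, f (d i) = dB i].
Proof.
case=> _ _ univA uniqA [_ _ univA' uniqA'] qB hB qC hC fC gB.
have [f [fh fe fu fd]] := univA A' eB uB dB qB hB.
have [g [gh ge gu gd]] := univA' A eC uC dC qC hC.
have [fCe fCu fCd] := fC f fh fe fu fd.
have [gBe gBu gBd] := gB g gh ge gu gd.
exists f; split=> //; split=> //; exists g.
- apply: (uniqA A (g \o f) id (alg_hom_comp gh fh) (alg_hom_id A)) => i /=.
  + by rewrite fe gBe.
  + by rewrite fu gBu.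
  + by rewrite fd gBd.
- apply: (uniqA' A' (f \o g) id (alg_hom_comp fh gh) (alg_hom_id A')) => i /=.
  + by rewrite ge fCe.
  + by rewrite gu fCu.
  + by rewrite gd fCd.
Qed.

Lemma scaler_solve_mid (V : lmodType K) (a b c : K) (x y z : V) : b != 0 ->
  y = (- b^-1 * a) *: x + b^-1 *: (a *: x + b *: y + c *: z) + (- b^-1 * c) *: z.
Proof.
move=> b_neq0; rewrite !scalerDr !scalerA mulVf // scale1r !mulNr !scaleNr.
by rewrite -(addrA _ y) addKr addrK.
Qed.

Section Generators.
Variables (A : algType K) (e u d : 'I_n -> A).
Hypothesis quiverA : quiver_rels e u d.

Lemma quiver_rels_scale (lam : 'I_n -> K) :
  quiver_rels e (fun i => lam i *: u i) d.
Proof.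
case: quiverA => ee sum_e eu de; split=> // i.
by rewrite -scalerAr -scalerAl -eu.
Qed.

Lemma H_rels_scale (lam : 'I_n -> K) a b c :
  (forall i, lam i != 0) -> H_rels a b c e u d ->
  H_rels (fun i => lam (vprev i) / lam i * a i)
         (fun i => lam (vprev i) / lam (vnext i) * b i)
         (fun i => lam (vprev i) * c i) e (fun i => lam i *: u i) d.
Proof.
move=> lam_neq0 hH i; have [hu hd] := hH i.
split; do 3 rewrite -?scalerAl -?scalerAr; rewrite !scalerA ?hu ?hd;
  rewrite !scalerDr !scalerA; congr (_ *: _ + _ *: _ + _ *: _);
  by field; rewrite ?lam_neq0.
Qed.

Lemma quiver_rels_rotate (s : 'I_n -> 'I_n) :
  injective s -> {morph s : i / vnext i} ->
  quiver_rels (fun i => e (s i)) (fun i => u (s i)) (fun i => d (s i)).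
Proof.
move=> s_inj s_next; case: quiverA => ee sum_e eu de; split=> [i j||i|i].
- by rewrite ee (inj_eq s_inj).
- by rewrite -sum_e [RHS](reindex_inj s_inj).
- by rewrite s_next; exact: eu.
- by rewrite s_next; exact: de.
Qed.

Lemma H_rels_rotate (s : 'I_n -> 'I_n) a b c :
  {morph s : i / vnext i} -> H_rels a b c e u d ->
  H_rels (fun i => a (s i)) (fun i => b (s i)) (fun i => c (s i))
         (fun i => e (s i)) (fun i => u (s i)) (fun i => d (s i)).
Proof.
move=> s_next hH i.
have s_prev : s (vprev i) = vprev (s i).
  by rewrite -[s (vprev i)]vnextK -s_next vprevK.
by rewrite s_next s_prev; exact: hH.
Qed.

Lemma quiver_rels_reflect :
  quiver_rels (fun i => e (vneg i)) (fun i => d (vneg1 i)) (fun i => u (vneg1 i)).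
Proof.
case: quiverA => ee sum_e eu de; split=> [i j||i|i].
- by rewrite ee (inj_eq (@vneg_inj n)).
- by rewrite -sum_e [RHS](reindex_inj (@vneg_inj n)).
- by rewrite vneg_next vnegE; exact: de.
- by rewrite vneg_next vnegE; exact: eu.
Qed.

Lemma H_rels_reflect a b c :
  (forall i, b i != 0) -> H_rels a b c e u d ->
  H_rels (fun i => - (b (vneg1 i))^-1 * a (vneg1 i))
         (fun i => (b (vneg1 i))^-1)
         (fun i => - (b (vneg1 i))^-1 * c (vneg1 i))
         (fun i => e (vneg i)) (fun i => d (vneg1 i)) (fun i => u (vneg1 i)).
Proof.
move=> b_neq0 hH i; rewrite vneg1_prev vneg1_next.
have [hu hd] := hH (vneg1 i).
by split; [rewrite hd | rewrite hu]; exact: scaler_solve_mid.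
Qed.

End Generators.
Section Isomorphisms.
Variables (A A' : algType K) (e u d : 'I_n -> A) (e' u' d' : 'I_n -> A').

Lemma H_scale_iso a b c (lam : 'I_n -> K) : (forall i, lam i != 0) ->
  is_H a b c e u d ->
  is_H (fun i => lam i * (lam (vprev i))^-1 * a i)
       (fun i => lam (vnext i) * (lam (vprev i))^-1 * b i)
       (fun i => (lam (vprev i))^-1 * c i) e' u' d' ->
  exists f : A -> A', [/\ alg_iso f, forall i, f (e i) = e' i,
    forall i, f (u i) = lam i *: u' i & forall i, f (d i) = d' i].
Proof.
move=> lam_neq0 HA HA'; have [qA hA _ _] := HA; have [qA' hA' _ _] := HA'.
have lamV_neq0 i : (lam i)^-1 != 0 by rewrite invr_eq0.
apply: (is_H_iso HA HA' (quiver_rels_scale qA' lam) _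
          (quiver_rels_scale qA (fun i => (lam i)^-1))).
- apply: eq_H_rels (H_rels_scale lam_neq0 hA') => i;
    by field; rewrite ?lam_neq0.
- apply: eq_H_rels (H_rels_scale lamV_neq0 hA) => i;
    by rewrite ?invrK // (mulrC (lam _)^-1).
- move=> f [_ fZ _ _] fe fu fd; split=> i //.
  by rewrite fZ fu scalerA mulVf ?scale1r.
- move=> g [_ gZ _ _] ge gu gd; split=> i //.
  by rewrite gZ gu scalerA mulfV ?scale1r.
Qed.

Lemma H_rotate_iso a b c :
  is_H a b c e u d ->
  is_H (fun i => a (vprev i)) (fun i => b (vprev i)) (fun i => c (vprev i))
       e' u' d' ->
  exists f : A -> A', [/\ alg_iso f, forall i, f (e i) = e' (vnext i),
    forall i, f (u i) = u' (vnext i) & forall i, f (d i) = d' (vnext i)].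
Proof.
move=> HA HA'; have [qA hA _ _] := HA; have [qA' hA' _ _] := HA'.
have vprev_next : {morph @vprev n : i / vnext i} by move=> i; rewrite vnextK vprevK.
apply: (is_H_iso HA HA'
          (quiver_rels_rotate qA' (can_inj (@vnextK n)) (frefl _)) _
          (quiver_rels_rotate qA (can_inj (@vprevK n)) vprev_next)
          (H_rels_rotate vprev_next hA)).
- by apply: eq_H_rels (H_rels_rotate (frefl _) hA') => i /=; rewrite vnextK.
- by move=> f _ fe fu fd; split=> i; rewrite ?fe ?fu ?fd vprevK.
- by move=> g _ ge gu gd; split=> i; rewrite ?ge ?gu ?gd vnextK.
Qed.

Lemma H_reflect_iso a b c : (forall i, b i != 0) ->
  is_H a b c e u d ->
  is_H (fun i => - (b (vneg1 i))^-1 * a (vneg1 i))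
       (fun i => (b (vneg1 i))^-1)
       (fun i => - (b (vneg1 i))^-1 * c (vneg1 i)) e' u' d' ->
  exists f : A -> A', [/\ alg_iso f, forall i, f (e i) = e' (vneg i),
    forall i, f (u i) = d' (vneg1 i) & forall i, f (d i) = u' (vneg1 i)].
Proof.
move=> b_neq0 HA HA'; have [qA hA _ _] := HA; have [qA' hA' _ _] := HA'.
have bV_neq0 i : (b (vneg1 i))^-1 != 0 by rewrite invr_eq0.
apply: (is_H_iso HA HA' (quiver_rels_reflect qA') _ (quiver_rels_reflect qA)
          (H_rels_reflect b_neq0 hA)).
- apply: eq_H_rels (H_rels_reflect bV_neq0 hA') => i /=;
    by rewrite vneg1K invrK //; field; rewrite b_neq0.
- by move=> f _ fe fu fd; split=> i; rewrite ?fe ?fu ?fd ?vnegK ?vneg1K.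
- by move=> g _ ge gu gd; split=> i; rewrite ?ge ?gu ?gd ?vnegK ?vneg1K.
Qed.

End Isomorphisms.
End Presentations.

Theorem lemma5p1 (K : closedFieldType) (hK : [pchar K] =i pred0)
    (n : nat) (hn : (0 < n)%N) (alpha beta gamma : 'I_n -> K) :
  (* (1) rescaling *)
  (forall lam : 'I_n -> K, (forall i, lam i != 0) ->
   forall (A : algType K) (e u d : 'I_n -> A)
          (A' : algType K) (e' u' d' : 'I_n -> A'),
   is_H alpha beta gamma e u d ->
   is_H (fun i => lam i * (lam (vprev i))^-1 * alpha i)
        (fun i => lam (vnext i) * (lam (vprev i))^-1 * beta i)
        (fun i => (lam (vprev i))^-1 * gamma i) e' u' d' ->
   exists f : A -> A', [/\ alg_iso f,
     forall i, f (e i) = e' i,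
     forall i, f (u i) = lam i *: u' i
   & forall i, f (d i) = d' i])
  /\
  (* (2) rotation *)
  (forall (A : algType K) (e u d : 'I_n -> A)
          (A' : algType K) (e' u' d' : 'I_n -> A'),
   is_H alpha beta gamma e u d ->
   is_H (fun i => alpha (vprev i)) (fun i => beta (vprev i))
        (fun i => gamma (vprev i)) e' u' d' ->
   exists f : A -> A', [/\ alg_iso f,
     forall i, f (e i) = e' (vnext i),
     forall i, f (u i) = u' (vnext i)
   & forall i, f (d i) = d' (vnext i)])
  /\
  (* (3) reflection *)
  ((forall i, beta i != 0) ->
   forall (A : algType K) (e u d : 'I_n -> A)
          (A' : algType K) (e' u' d' : 'I_n -> A'),
   is_H alpha beta gamma e u d ->
   is_H (fun i => - (beta (vneg1 i))^-1 * alpha (vneg1 i))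
        (fun i => (beta (vneg1 i))^-1)
        (fun i => - (beta (vneg1 i))^-1 * gamma (vneg1 i)) e' u' d' ->
   exists f : A -> A', [/\ alg_iso f,
     forall i, f (e i) = e' (vneg i),
     forall i, f (u i) = d' (vneg1 i)
   & forall i, f (d i) = u' (vneg1 i)]).
Proof.
split; [|split].
- by move=> lam lam_neq0 A e u d A' e' u' d'; exact: H_scale_iso.
- by move=> A e u d A' e' u' d'; exact: H_rotate_iso.
- by move=> beta_neq0 A e u d A' e' u' d'; exact: H_reflect_iso.
Qed.
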